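(* Let $M\ge1$. There exist two languages $L_1,L_2$ and an enumeration $x_{1:\infty}$ which, for each $K\in\{L_1,L_2\}$, is an $M$-bounded displacement enumeration with respect to $K$ and an enumeration of $K$ with $o(1)$-noise, such that any element-based generator that generates in the limit from the target $K$ (for either possible target $K\in\{L_1,L_2\}$) on this enumeration achieves element-based upper density at most $1/M$ (for some choice of the target).
   Context: The universe is $U=\mathbb{N}$ with its natural order; a language is an infinite subset of $U$ with canonical enumeration $\ell_1<\ell_2<\cdots$. For $A,B\subseteq\mathbb{N}$ with $B=\{b_1<b_2<\cdots\}$, $\mu_{\rm up}(A,B)=\limsup_n\frac1n|A\cap\{b_1,\dots,b_n\}|$. For $x\in U$, $\sigma(x,L)=j$ if $x=\ell_j$ and $0$ if $x\notin L$; $x_{1:\infty}$ is an $M$-bounded displacement enumeration with respect to $L$ if there is $n^\star$ with $\sigma(x_n,L)\le Mn$ for all $n\ge n^\star$. An enumeration of $L$ with $o(1)$-noise is a sequence of distinct elements listing every element of $L$ with $\frac1n|\{t\le n:x_t\notin L\}|\to0$. An element-based generator outputs, from $x_1,\dots,x_n$ and knowledge of $\{L_1,L_2\}$ (not $K$), an element $w_n\notin\{x_1,\dots,x_n,w_1,\dots,w_{n-1}\}$; it generates in the limit from $K$ if $w_n\in K$ for all large $n$; its element-based upper density is $\mu_{\rm up}(\{w_1,w_2,\dots\},K)$. *)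

From Stdlib Require Import Reals List Arith ClassicalDescription.
From Coquelicot Require Import Coquelicot.
Import ListNotations.
Open Scope R_scope.

Definition ind (P : Prop) : nat :=
  if excluded_middle_informative P then 1%nat else 0%nat.

Definition language (L : nat -> Prop) : Prop :=
  forall N : nat, exists m : nat, (N <= m)%nat /\ L m.

(* rank L y = |{ z <= y : z in L }|; if y in L, y = ell_{rank L y}. *)
Definition rank (L : nat -> Prop) (y : nat) : nat :=
  list_sum (map (fun z => ind (L z)) (seq 0 (S y))).

Definition sigma (y : nat) (L : nat -> Prop) : nat :=
  if excluded_middle_informative (L y) then rank L y else 0%nat.

(* Enumerations are 0-indexed: x t stands for x_{t+1}. *)

Definition bounded_displacement (M : R) (x : nat -> nat) (L : nat -> Prop) : Prop :=
  exists nstar : nat, forall n : nat, (nstar <= n)%nat -> (1 <= n)%nat ->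
    INR (sigma (x (n - 1)%nat) L) <= M * INR n.

Definition noise_count (x : nat -> nat) (L : nat -> Prop) (n : nat) : nat :=
  list_sum (map (fun t => ind (~ L (x t))) (seq 0 n)).

Definition noisy_enumeration (x : nat -> nat) (L : nat -> Prop) : Prop :=
  (forall s t : nat, x s = x t -> s = t) /\
  (forall y : nat, L y -> exists t : nat, x t = y) /\
  is_lim_seq (fun n => INR (noise_count x L n) / INR n) 0.

Definition inter_count (A : nat -> Prop) (L : nat -> Prop) (n : nat) : nat :=
  list_sum (map (fun j => ind (exists y, L y /\ rank L y = j /\ A y)) (seq 1 n)).

Definition mu_up (A : nat -> Prop) (B : nat -> Prop) : Rbar :=
  LimSup_seq (fun n => INR (inter_count A B n) / INR n).

(* An element-based generator: a map from the finite input prefix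
   [x_1; ...; x_n] to an output w_n. *)
Definition generator := list nat -> nat.

Definition prefix (x : nat -> nat) (n : nat) : list nat := map x (seq 0 n).

Definition gen_out (G : generator) (x : nat -> nat) (k : nat) : nat :=
  G (prefix x (S k)).

Definition valid_generator (G : generator) : Prop :=
  forall z : nat -> nat, (forall s t, z s = z t -> s = t) ->
    forall k : nat,
      ~ In (gen_out G z k) (prefix z (S k)) /\
      (forall j : nat, (j < k)%nat -> gen_out G z j <> gen_out G z k).

Definition generates_in_limit (G : generator) (x : nat -> nat) (K : nat -> Prop) : Prop :=
  exists N : nat, forall k : nat, (N <= k)%nat -> K (gen_out G x k).

Definition element_density (G : generator) (x : nat -> nat) (K : nat -> Prop) : Rbar :=
  mu_up (fun y => exists k : nat, gen_out G x k = y) K.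

(* Take L1 = N and L2 = {floor (k M) : k >= 1}, a language of density 1/M.
   The enumeration lists L2 in increasing order, except that the square
   position c^2 carries c whenever c is not in L2.  It thus lists all of N,
   its noise with respect to L2 sits at the O(sqrt n) square positions, and
   the j-th element of L2, floor (j M) <= j M, appears at a position later
   than j, so the displacement is M-bounded for both targets.  A generator that
   eventually outputs only elements of L2 outputs, up to finitely many
   exceptions, a subset of L2, whose upper density in L1 = N is 1/M. *)

(* ClassicalDescription comes last: [ind] is defined with its
   [excluded_middle_informative], not ClassicalEpsilon's. *)
From Stdlib Require Import Reals List Arith Lia Lra ClassicalEpsilon ClassicalDescription.
From Coquelicot Require Import Coquelicot.
Open Scope R_scope.

Lemma ind_true (P : Prop) : P -> ind P = 1%nat.
Proof.
  intro HP; unfold ind; destruct (excluded_middle_informative P); [reflexivity|contradiction].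
Qed.

Lemma ind_false (P : Prop) : ~ P -> ind P = 0%nat.
Proof.
  intro HP; unfold ind; destruct (excluded_middle_informative P); [contradiction|reflexivity].
Qed.

Lemma ind_iff (P Q : Prop) : (P <-> Q) -> ind P = ind Q.
Proof.
  intro HPQ; unfold ind.
  destruct (excluded_middle_informative P), (excluded_middle_informative Q); tauto.
Qed.

Lemma ind_le_1 (P : Prop) : (ind P <= 1)%nat.
Proof. unfold ind; destruct (excluded_middle_informative P); lia. Qed.

Lemma ind_impl (P Q : Prop) : (P -> Q) -> (ind P <= ind Q)%nat.
Proof.
  intro HPQ; unfold ind.
  destruct (excluded_middle_informative P), (excluded_middle_informative Q); lia || tauto.
Qed.

Definition count (P : nat -> Prop) (n : nat) : nat :=
  list_sum (map (fun t => ind (P t)) (seq 0 n)).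

Lemma count_0 P : count P 0 = 0%nat.
Proof. reflexivity. Qed.

Lemma count_S P n : count P (S n) = (count P n + ind (P n))%nat.
Proof. unfold count; rewrite seq_S, map_app, list_sum_app; simpl; lia. Qed.

Lemma count_le P n : (count P n <= n)%nat.
Proof. induction n; rewrite ?count_0, ?count_S; [|pose proof (ind_le_1 (P n))]; lia. Qed.

Lemma count_mono P m n : (m <= n)%nat -> (count P m <= count P n)%nat.
Proof. induction 1; rewrite ?count_0, ?count_S; lia. Qed.

Lemma count_lt_S P y : P y -> (count P y < count P (S y))%nat.
Proof. intro Hy; rewrite count_S, ind_true by exact Hy; lia. Qed.

Lemma count_impl (P Q : nat -> Prop) n :
  (forall t, P t -> Q t) -> (count P n <= count Q n)%nat.
Proof.
  intro HPQ; induction n; rewrite ?count_0, ?count_S; [lia|].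
  pose proof (ind_impl _ _ (HPQ n)); lia.
Qed.

Lemma count_union_le (P Q R : nat -> Prop) n :
  (forall t, P t -> Q t \/ R t) -> (count P n <= count Q n + count R n)%nat.
Proof.
  intro HP; induction n; rewrite ?count_0, ?count_S; [lia|].
  unfold ind at 1; destruct (excluded_middle_informative (P n)) as [HPn|]; [|lia].
  destruct (HP n HPn) as [HQ|HR];
    [rewrite (ind_true (Q n) HQ) | rewrite (ind_true (R n) HR)]; lia.
Qed.

Lemma count_lt_bound B n : (count (fun t => t < B)%nat n <= B)%nat.
Proof.
  induction n; rewrite ?count_0, ?count_S; [lia|].
  destruct (Nat.lt_ge_cases n B).
  - pose proof (count_le (fun t => t < B)%nat n); pose proof (ind_le_1 (n < B)%nat); lia.
  - rewrite ind_false by lia; lia.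
Qed.

Lemma count_lt_of_not_0 P n : ~ P 0%nat -> (count P (S n) <= n)%nat.
Proof.
  intro HP0; induction n; rewrite count_S; [rewrite ind_false by exact HP0; reflexivity|].
  pose proof (ind_le_1 (P (S n))); lia.
Qed.

Lemma count_inj P y z : P y -> P z -> count P y = count P z -> y = z.
Proof.
  intros Hy Hz E; destruct (Nat.lt_trichotomy y z) as [Hlt|[|Hlt]]; trivial; exfalso.
  - pose proof (count_lt_S P y Hy); pose proof (count_mono P _ _ Hlt); lia.
  - pose proof (count_lt_S P z Hz); pose proof (count_mono P _ _ Hlt); lia.
Qed.

Lemma count_surj P n i : (i < count P n)%nat -> exists y, P y /\ count P y = i.
Proof.
  induction n; rewrite ?count_0, ?count_S; [lia|]; intro Hi.
  destruct (Nat.lt_ge_cases i (count P n)); [auto|].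
  unfold ind in Hi; destruct (excluded_middle_informative (P n)); [|lia].
  exists n; split; [assumption|lia].
Qed.

Lemma language_count_unbounded P : language P -> forall k, exists n, (k < count P n)%nat.
Proof.
  intros HP k; induction k as [|k [n Hn]].
  - destruct (HP 0%nat) as [y [_ Hy]]; exists (S y); pose proof (count_lt_S P y Hy); lia.
  - destruct (HP n) as [y [Hny Hy]]; exists (S y).
    pose proof (count_lt_S P y Hy); pose proof (count_mono P _ _ Hny); lia.
Qed.

Lemma count_unbounded_language P : (forall k, exists n, (k < count P n)%nat) -> language P.
Proof.
  intros HP N; destruct (HP (count P N)) as [n Hn].
  destruct (count_surj P n _ Hn) as [y [Hy Ey]]; exists y; split; [|exact Hy].
  destruct (Nat.le_gt_cases N y) as [|Hlt]; [assumption|].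
  pose proof (count_lt_S P y Hy); pose proof (count_mono P _ _ Hlt); lia.
Qed.

Definition nth_in (P : nat -> Prop) (i : nat) : nat :=
  epsilon (inhabits 0%nat) (fun y => P y /\ count P y = i).

Lemma nth_inP P i : language P -> P (nth_in P i) /\ count P (nth_in P i) = i.
Proof.
  intro HP; unfold nth_in; apply epsilon_spec.
  destruct (language_count_unbounded P HP i) as [n Hn]; exact (count_surj P n i Hn).
Qed.

Lemma nth_in_count P y : language P -> P y -> nth_in P (count P y) = y.
Proof.
  intros HP Hy; destruct (nth_inP P (count P y) HP) as [H1 H2].
  exact (count_inj P _ _ H1 Hy H2).
Qed.

Definition is_square (t : nat) : Prop := exists c, t = (c * c)%nat.

Lemma succ_square_not_square n : ~ is_square (S (S n * S n)).
Proof. intros [c Hc]; destruct (Nat.le_gt_cases c (S n)); nia. Qed.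

Lemma count_squares_S n : (count is_square (S n) <= S (Nat.sqrt n))%nat.
Proof.
  induction n; [rewrite count_S, count_0; pose proof (ind_le_1 (is_square 0)); lia|].
  rewrite count_S; pose proof (Nat.sqrt_spec' n) as Hn.
  destruct (classic (is_square (S n))) as [[c Hc]|Hsq].
  - rewrite ind_true by (exists c; exact Hc).
    replace (Nat.sqrt (S n)) with c by (rewrite Hc; symmetry; apply Nat.sqrt_square).
    enough (Nat.sqrt n < c)%nat by lia; nia.
  - rewrite ind_false by exact Hsq; pose proof (Nat.sqrt_le_mono n (S n)); lia.
Qed.

Lemma count_squares_le K n : (K * K <= n)%nat -> (K * count is_square n <= 2 * n)%nat.
Proof.
  intro HK; destruct n as [|n]; [rewrite count_0; lia|].
  pose proof (count_squares_S n) as Hc; pose proof (Nat.sqrt_spec' n) as [Hs _].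
  set (c := count is_square (S n)) in *; set (s := Nat.sqrt n) in *.
  destruct (Nat.lt_ge_cases s K).
  - assert (K * c <= K * K)%nat by (apply Nat.mul_le_mono_l; lia); lia.
  - assert (K * c <= s * S s)%nat by (apply Nat.mul_le_mono; lia); nia.
Qed.

Lemma count_squares_ratio : is_lim_seq (fun n => INR (count is_square n) / INR n) 0.
Proof.
  apply is_lim_seq_spec; intro eps; pose proof (cond_pos eps).
  destruct (INR_unbounded (2 / eps)) as [K HK].
  assert (HK0 : 0 < INR K) by (apply (Rlt_trans _ (2 / eps)); [apply Rdiv_lt_0_compat|]; lra).
  exists (K * K)%nat; intros n Hn.
  assert (HKpos : (0 < K)%nat) by (apply INR_lt; simpl; lra).
  assert (Hn0 : 0 < INR n) by (apply lt_0_INR; nia).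
  pose proof (le_INR _ _ (count_squares_le K n Hn)) as Hc; rewrite !mult_INR in Hc.
  pose proof (pos_INR (count is_square n)).
  rewrite Rminus_0_r, Rabs_pos_eq by (apply Rdiv_le_0_compat; lra).
  apply Rlt_div_l; [lra|].
  apply (Rmult_lt_reg_l (INR K)); [lra|].
  apply Rlt_div_l in HK; [simpl in Hc; nra|lra].
Qed.

Section FloorMultiples.

Variable M : R.
Hypothesis M_ge_1 : 1 <= M.

Lemma ceil_div_exists y : exists k : nat, INR y <= M * INR k < INR y + M.
Proof.
  induction y as [|y [k Hk]]; [exists 0%nat; simpl; lra|].
  rewrite S_INR; destruct (Rle_lt_dec (INR y + 1) (M * INR k)).
  - exists k; lra.
  - exists (S k); rewrite S_INR; lra.
Qed.

Definition ceil_div (y : nat) : nat :=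
  epsilon (inhabits 0%nat) (fun k => INR y <= M * INR k < INR y + M).

Lemma ceil_divP y : INR y <= M * INR (ceil_div y) < INR y + M.
Proof. exact (epsilon_spec _ _ (ceil_div_exists y)). Qed.

Lemma lt_of_M_mul_lt a b : M * INR a < M * INR b -> (a < b)%nat.
Proof. intro H; apply INR_lt, (Rmult_lt_reg_l M); lra. Qed.

Lemma ceil_div_1 : ceil_div 1 = 1%nat.
Proof.
  pose proof (ceil_divP 1); simpl in *.
  enough (0 < ceil_div 1 < 2)%nat by lia; split; apply lt_of_M_mul_lt; simpl; lra.
Qed.

Lemma ceil_div_step y : (ceil_div y <= ceil_div (S y) <= S (ceil_div y))%nat.
Proof.
  pose proof (ceil_divP y); pose proof (ceil_divP (S y)); rewrite S_INR in *.
  split; [enough (ceil_div y < S (ceil_div (S y)))%nat by lia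
         |enough (ceil_div (S y) < S (S (ceil_div y)))%nat by lia];
    apply lt_of_M_mul_lt; rewrite !S_INR; lra.
Qed.

(* The jumps of [ceil_div] are the integer parts of the multiples [k * M];
   [1 <= y] discards the jump at [0], which comes from [k = 0]. *)
Definition floor_multiples (y : nat) : Prop :=
  (1 <= y)%nat /\ (ceil_div y < ceil_div (S y))%nat.

Lemma count_floor_multiples n : S (count floor_multiples (S n)) = ceil_div (S n).
Proof.
  induction n.
  - rewrite count_S, count_0, ind_false, ceil_div_1 by (intros [? _]; lia); reflexivity.
  - rewrite count_S; pose proof (ceil_div_step (S n)).
    unfold ind; destruct (excluded_middle_informative (floor_multiples (S n))) as [[_ Hj]|Hj].
    + lia.
    + assert (ceil_div (S (S n)) = ceil_div (S n)) by (apply Nat.le_antisymm; [|lia];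
        apply Nat.nlt_ge; intro; apply Hj; split; [lia|assumption]).
      lia.
Qed.

Lemma count_floor_multiples_le n : INR (count floor_multiples n) * M <= INR n.
Proof.
  destruct n as [|n]; [simpl; lra|].
  pose proof (ceil_divP (S n)) as Hn; rewrite <- count_floor_multiples, !S_INR in Hn.
  rewrite S_INR; lra.
Qed.

Lemma floor_multiples_language : language floor_multiples.
Proof.
  apply count_unbounded_language; intro k.
  destruct (INR_unbounded (M * INR (S k))) as [n Hn]; exists (S n).
  pose proof (ceil_divP (S n)) as HSn; rewrite <- count_floor_multiples, S_INR in HSn.
  enough (S k < S (count floor_multiples (S n)))%nat by lia; apply lt_of_M_mul_lt; lra.
Qed.

Lemma floor_multiples_0 : ~ floor_multiples 0.
Proof. intros [H _]; lia. Qed.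

Lemma floor_multiples_rank a :
  floor_multiples a -> INR (S a) <= M * INR (S (S (count floor_multiples a))).
Proof.
  intros [Ha Hjump]; destruct a as [|a]; [lia|].
  rewrite count_floor_multiples; pose proof (ceil_div_step (S a)).
  replace (S (ceil_div (S a))) with (ceil_div (S (S a))) by lia; apply ceil_divP.
Qed.

End FloorMultiples.

Section Interleave.

Variable L : nat -> Prop.
Hypothesis L_language : language L.
Hypothesis L_0 : ~ L 0%nat.

Definition noise_slot (t : nat) : Prop := exists c, t = (c * c)%nat /\ ~ L c.

Definition interleave (t : nat) : nat :=
  if excluded_middle_informative (noise_slot t) then Nat.sqrt t
  else nth_in L (count (fun s => ~ noise_slot s) t).

Lemma regular_slots_language : language (fun s => ~ noise_slot s).
Proof.
  intro N; exists (S (S N * S N)); split; [nia|].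
  intros [c [Hc _]]; apply (succ_square_not_square N); exists c; exact Hc.
Qed.

Lemma interleave_noise_slot t :
  noise_slot t -> (interleave t * interleave t)%nat = t /\ ~ L (interleave t).
Proof.
  intro Ht; unfold interleave.
  destruct (excluded_middle_informative (noise_slot t)); [|contradiction].
  destruct Ht as [c [-> Hc]]; rewrite Nat.sqrt_square; auto.
Qed.

Lemma interleave_regular_slot t :
  ~ noise_slot t -> L (interleave t) /\ (count L (interleave t) < t)%nat.
Proof.
  intro Ht; unfold interleave.
  destruct (excluded_middle_informative (noise_slot t)); [contradiction|].
  destruct t as [|t]; [exfalso; apply Ht; exists 0%nat; auto|].
  destruct (nth_inP L (count (fun s => ~ noise_slot s) (S t)) L_language) as [HL ->].
  split; [exact HL|].
  enough (count (fun s => ~ noise_slot s) (S t) <= t)%nat by lia.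
  apply count_lt_of_not_0; intros H0; apply H0; exists 0%nat; auto.
Qed.

Lemma interleave_injective s t : interleave s = interleave t -> s = t.
Proof.
  intro E.
  destruct (classic (noise_slot s)) as [Hs|Hs], (classic (noise_slot t)) as [Ht|Ht].
  - destruct (interleave_noise_slot s Hs) as [<- _], (interleave_noise_slot t Ht) as [<- _].
    rewrite E; reflexivity.
  - exfalso; apply (interleave_noise_slot s Hs); rewrite E; apply interleave_regular_slot, Ht.
  - exfalso; apply (interleave_noise_slot t Ht); rewrite <- E; apply interleave_regular_slot, Hs.
  - apply (count_inj (fun s => ~ noise_slot s) _ _ Hs Ht).
    unfold interleave in E; destruct (excluded_middle_informative (noise_slot s)),
      (excluded_middle_informative (noise_slot t)); try contradiction.
    rewrite <- (proj2 (nth_inP L _ L_language)), E; apply nth_inP, L_language.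
Qed.

Lemma interleave_surjective y : exists t, interleave t = y.
Proof.
  destruct (classic (L y)) as [Hy|Hy].
  - destruct (language_count_unbounded _ regular_slots_language (count L y)) as [n Hn].
    destruct (count_surj _ n _ Hn) as [t [Ht Ct]]; exists t.
    unfold interleave; destruct (excluded_middle_informative (noise_slot t)); [contradiction|].
    rewrite Ct; apply nth_in_count; assumption.
  - exists (y * y)%nat.
    unfold interleave; destruct (excluded_middle_informative (noise_slot (y * y))) as [|Hn].
    + apply Nat.sqrt_square.
    + exfalso; apply Hn; exists y; auto.
Qed.

Lemma interleave_displacement (M : R) :
  1 <= M -> (forall a, L a -> INR (S a) <= M * INR (S (S (count L a)))) ->
  forall t, INR (S (interleave t)) <= M * INR (S t).
Proof.
  intros HM Hrank t; pose proof (pos_INR (S t)).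
  destruct (classic (noise_slot t)) as [Ht|Ht].
  - destruct (interleave_noise_slot t Ht) as [Et _].
    assert (Hle : (S (interleave t) <= S t)%nat) by nia; apply le_INR in Hle; nra.
  - destruct (interleave_regular_slot t Ht) as [HL Hlt].
    assert (Hle : (S (S (count L (interleave t))) <= S t)%nat) by lia; apply le_INR in Hle.
    pose proof (Hrank _ HL); nra.
Qed.

End Interleave.

Lemma sigma_le y L : (sigma y L <= S y)%nat.
Proof.
  unfold sigma; destruct (excluded_middle_informative (L y)); [|lia].
  exact (count_le L (S y)).
Qed.

Lemma bounded_displacement_of_le (M : R) x K :
  (forall t, INR (S (x t)) <= M * INR (S t)) -> bounded_displacement M x K.
Proof.
  intro Hx; exists 1%nat; intros n _ Hn.
  replace n with (S (n - 1)) at 2 by lia.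
  pose proof (le_INR _ _ (sigma_le (x (n - 1)%nat) K)); pose proof (Hx (n - 1)%nat); lra.
Qed.

Lemma noisy_enumeration_of_square_noise x K :
  (forall s t, x s = x t -> s = t) -> (forall y, exists t, x t = y) ->
  (forall t, ~ K (x t) -> is_square t) -> noisy_enumeration x K.
Proof.
  intros Hinj Hsurj Hnoise; split; [exact Hinj|split; [intros y _; apply Hsurj|]].
  apply (is_lim_seq_le_le (fun _ => 0) (fun n => INR (noise_count x K n) / INR n)
           (fun n => INR (count is_square n) / INR n));
    [|apply is_lim_seq_const|apply count_squares_ratio].
  intro n; destruct n as [|n]; [simpl; unfold Rdiv; rewrite Rinv_0, !Rmult_0_r; lra|].
  pose proof (lt_0_INR (S n) (Nat.lt_0_succ n)).
  split; [apply Rdiv_le_0_compat; [apply pos_INR|lra]|].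
  apply Rmult_le_compat_r; [left; apply Rinv_0_lt_compat; lra|].
  apply le_INR, count_impl, Hnoise.
Qed.

Lemma rank_full y : rank (fun _ => True) y = S y.
Proof.
  change (count (fun _ => True) (S y) = S y).
  induction (S y) as [|n IH]; rewrite ?count_0, ?count_S, ?IH, ?ind_true; trivial; lia.
Qed.

Lemma inter_count_full A n : inter_count A (fun _ => True) n = count A n.
Proof.
  unfold inter_count, count; rewrite <- seq_shift, map_map; f_equal; apply map_ext; intro t.
  apply ind_iff; split.
  - intros [y [_ [Hy HA]]]; rewrite rank_full in Hy; injection Hy as ->; exact HA.
  - intro HA; exists t; split; [trivial|split; [apply rank_full|exact HA]].
Qed.

Lemma outputs_eventually_in G x K :
  generates_in_limit G x K ->
  exists B, forall y, (exists k, gen_out G x k = y) -> K y \/ (y < B)%nat.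
Proof.
  intros [N HN]; set (early := map (gen_out G x) (seq 0 N)); exists (S (list_max early)).
  intros y [k <-]; destruct (Nat.le_gt_cases N k) as [|Hk]; [left; auto|right].
  pose proof (proj1 (list_max_le early _) (le_n _)) as Hearly; rewrite Forall_forall in Hearly.
  apply Nat.lt_succ_r, Hearly, in_map, in_seq; lia.
Qed.

Lemma mu_up_full_le A P (c : R) B :
  (forall y, A y -> P y \/ (y < B)%nat) -> (forall n, INR (count P n) <= c * INR n) ->
  Rbar_le (mu_up A (fun _ => True)) c.
Proof.
  intros HA HP; unfold mu_up.
  apply Rbar_le_trans with (LimSup_seq (fun n => c + INR B * / INR n)).
  - apply LimSup_le; exists 1%nat; intros n Hn.
    assert (Hn0 : 0 < INR n) by (apply lt_0_INR; lia).
    rewrite inter_count_full; apply Rle_div_l; [exact Hn0|].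
    replace ((c + INR B * / INR n) * INR n) with (c * INR n + INR B) by (field; lra).
    pose proof (le_INR _ _ (count_union_le A P (fun t => t < B)%nat n HA)) as Hc.
    pose proof (le_INR _ _ (count_lt_bound B n)); rewrite plus_INR in Hc.
    specialize (HP n); lra.
  - assert (Hlim : is_lim_seq (fun n => c + INR B * / INR n) c).
    { pose proof (is_lim_seq_inv _ _ is_lim_seq_INR ltac:(discriminate)) as Hinv.
      pose proof (is_lim_seq_scal_l _ (INR B) _ Hinv) as HB; simpl in HB.
      pose proof (is_lim_seq_plus' _ _ _ _ (is_lim_seq_const c) HB) as Hsum.
      rewrite Rmult_0_r, Rplus_0_r in Hsum; exact Hsum. }
    rewrite (is_LimSup_seq_unique _ _ (is_lim_LimSup_seq _ _ Hlim)); apply Rbar_le_refl.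
Qed.

Theorem theorem7p12 (M : R) (HM : 1 <= M) :
  exists L1 L2 : nat -> Prop,
    language L1 /\ language L2 /\ L1 <> L2 /\
    exists x : nat -> nat,
      (forall K : nat -> Prop, (K = L1 \/ K = L2) ->
         bounded_displacement M x K /\ noisy_enumeration x K) /\
      (forall G : generator, valid_generator G ->
         generates_in_limit G x L1 -> generates_in_limit G x L2 ->
         Rbar_le (element_density G x L1) (Finite (1 / M)) \/
         Rbar_le (element_density G x L2) (Finite (1 / M))).
Proof.
  pose proof (floor_multiples_language M HM) as HL2.
  pose proof (floor_multiples_0 M) as HL2_0.
  set (L2 := floor_multiples M) in *.
  set (x := interleave L2).
  exists (fun _ => True), L2; split; [intro N; exists N; auto|]; split; [exact HL2|].
  split; [intro E; apply HL2_0; rewrite <- E; trivial|].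
  exists x; split.
  - intros K HK; split.
    + apply bounded_displacement_of_le, (interleave_displacement L2 HL2 HL2_0 M HM).
      apply floor_multiples_rank, HM.
    + apply noisy_enumeration_of_square_noise;
        [exact (interleave_injective L2 HL2 HL2_0) | exact (interleave_surjective L2 HL2) |].
      intros t Hnoise; destruct (classic (noise_slot L2 t)) as [[c [-> _]]|Hreg];
        [exists c; reflexivity|].
      exfalso; destruct HK as [->| ->]; [exact (Hnoise I)|].
      exact (Hnoise (proj1 (interleave_regular_slot L2 HL2 HL2_0 t Hreg))).
  - intros G _ _ HG; left.
    destruct (outputs_eventually_in G x L2 HG) as [B HB].
    apply (mu_up_full_le _ L2 _ B HB); intro n.
    apply (Rmult_le_reg_r M); [lra|].
    replace (1 / M * INR n * M) with (INR n) by (field; lra).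
    apply count_floor_multiples_le, HM.
Qed.
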